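(* Every proper metric space (i.e. one whose closed balls are compact) has property (P) for nets.
   Context: For a nonempty subset $C$ of a metric space $X$, ${\rm cov}(C)$ is the intersection of all closed balls of $X$ containing $C$. Property (P) for nets: for any directed (pre)ordered index set $(I,\le)$ and any two bounded nets $\{x_s\}_{s\in I}$, $\{z_s\}_{s\in I}$ in $X$ with $z_s\in{\rm cov}(\{x_j:j\ge s\})$ for every $s$, there is $z\in\bigcap_s{\rm cov}(\{z_j:j\ge s\})$ such that $\limsup_s d(z,x_s)\le\limsup_t\limsup_s d(z_t,x_s)$. *)

From mathcomp Require Import all_boot all_order all_algebra.
From mathcomp Require Import all_classical all_reals all_analysis.
Set Implicit Arguments. Unset Strict Implicit. Unset Printing Implicit Defensive.
Import Order.TTheory GRing.Theory Num.Theory.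
Local Open Scope classical_set_scope.
Local Open Scope ring_scope.

Section MetricDefs.
Variables (R : realType) (X : Type) (d : X -> X -> R).

Definition is_metric : Prop :=
  (forall x y, 0 <= d x y) /\
  (forall x y, d x y = 0 <-> x = y) /\
  (forall x y, d x y = d y x) /\
  (forall x y z, d x z <= d x y + d y z).

Definition cball (c : X) (r : R) : set X := [set y | d c y <= r].
Definition oball (c : X) (r : R) : set X := [set y | d c y < r].

Definition mopen (U : set X) : Prop :=
  forall x, U x -> exists2 e : R, 0 < e & oball x e `<=` U.

Definition mcompact (K : set X) : Prop :=
  forall F : set (set X), (forall U, F U -> mopen U) ->
    K `<=` \bigcup_(U in F) U ->
    exists (n : nat) (G : nat -> set X),
      (forall i, (i < n)%N -> F (G i)) /\ K `<=` \bigcup_(i in `I_n) G i.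

Definition proper_metric : Prop := forall c r, mcompact (cball c r).

Definition mbounded (A : set X) : Prop := exists c r, A `<=` cball c r.

Definition cov (C : set X) : set X :=
  [set y | forall c r, C `<=` cball c r -> cball c r y].

End MetricDefs.

Definition directed_preorder (I : Type) (le : I -> I -> Prop) : Prop :=
  (exists i : I, True) /\
  (forall i, le i i) /\
  (forall i j k, le i j -> le j k -> le i k) /\
  (forall i j, exists k, le i k /\ le j k).

Definition tail (I : Type) (le : I -> I -> Prop) (s : I) : set I := [set j | le s j].

Definition net_limsup (R : realType) (I : Type) (le : I -> I -> Prop)
  (f : I -> \bar R) : \bar R :=
  ereal_inf (range (fun s => ereal_sup (f @` tail le s))).

Local Open Scope ereal_scope.

Definition propertyP (R : realType) (X : Type) (d : X -> X -> R) : Prop :=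
  forall (I : Type) (le : I -> I -> Prop), directed_preorder le ->
  forall (x z : I -> X),
    mbounded d (range x) -> mbounded d (range z) ->
    (forall s, cov d (x @` tail le s) (z s)) ->
    exists w : X,
      (forall s, cov d (z @` tail le s) w) /\
      net_limsup le (fun s => (d w (x s))%:E) <=
        net_limsup le (fun t => net_limsup le (fun s => (d (z t) (x s))%:E)).

From mathcomp Require Import all_boot all_order all_algebra.
From mathcomp Require Import all_classical all_reals all_analysis.
Set Implicit Arguments. Unset Strict Implicit. Unset Printing Implicit Defensive.
Import Order.TTheory GRing.Theory Num.Theory.
Local Open Scope classical_set_scope.
Local Open Scope ring_scope.

(* A bounded net z in a proper space has a cluster point w: otherwise every
   point has a ball that z eventually avoids, finitely many of these balls
   cover a closed ball containing z, and directedness yields an index beyond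
   all of them.  Closed balls are closed, so w lies in cov of every tail of z.
   Finally d(w, x_s) <= d(w, z_t) + d(z_t, x_s) with z_t arbitrarily close to w
   along every tail gives the limsup bound. *)

Lemma directed_ub_seq (I : Type) (le : I -> I -> Prop) :
  directed_preorder le ->
  forall (f : nat -> I) (n : nat), exists s, forall i, (i < n)%N -> le (f i) s.
Proof.
move=> [[s0 _] [_ [le_tr le_dir]]] f; elim=> [|n [s ubs]]; first by exists s0.
have [k [le_sk le_fk]] := le_dir s (f n).
by exists k => i; rewrite ltnS leq_eqVlt => /predU1P[-> //|/ubs/le_tr]; apply.
Qed.

Lemma net_limsup_le_cstD (R : realType) (I : Type) (le : I -> I -> Prop)
    (c : R) (f g : I -> R) :
  (forall s, f s <= c + g s) ->
  (net_limsup le (fun s => (f s)%:E) <= c%:E + net_limsup le (fun s => (g s)%:E))%E.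
Proof.
move=> fg; rewrite -leeBlDl //; apply: le_ereal_inf_tmp => _ [s _ <-].
rewrite leeBlDl //.
apply: (@le_trans _ _ (ereal_sup ((fun j => (f j)%:E) @` tail le s))).
  by apply: ereal_inf_lbound; exists s.
apply: ge_ereal_sup => _ [j sj <-]; apply: (@le_trans _ _ (c + g j)%:E).
  by rewrite lee_fin.
by rewrite EFinD leeD2l //; apply: ereal_sup_ubound; exists j.
Qed.

Section MetricNets.
Variables (R : realType) (X : Type) (d : X -> X -> R).
Hypothesis hd : is_metric d.

Definition cluster_point (I : Type) (le : I -> I -> Prop) (z : I -> X) (w : X) :=
  forall e, 0 < e -> forall s, exists2 t, le s t & d w (z t) < e.

Lemma mopen_oball y e : mopen d (oball d y e).
Proof.
have [_ [_ [_ d_tri]]] := hd.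
move=> u /= du; exists (e - d y u); first by rewrite subr_gt0.
by move=> v /= dv; apply: le_lt_trans (d_tri y u v) _; rewrite -ltrBrDl.
Qed.

Lemma mcompact_oball_cover (x0 : X) K (rad : X -> R) :
  mcompact d K -> (forall y, 0 < rad y) ->
  exists n (c : nat -> X), K `<=` \bigcup_(i in `I_n) oball d (c i) (rad (c i)).
Proof.
have [_ [d_eq0 _]] := hd.
move=> cK rad_gt0.
pose F := [set oball d y (rad y) | y in [set: X]].
have F_open U : F U -> mopen d U by move=> [y _ <-]; apply: mopen_oball.
have K_F : K `<=` \bigcup_(U in F) U.
  move=> y _; exists (oball d y (rad y)); first by exists y.
  by rewrite /oball /= (proj2 (d_eq0 y y) erefl).
have [n [G [FG KG]]] := cK F F_open K_F.
have /choice[c Gc] : forall i, exists y, (i < n)%N -> G i = oball d y (rad y).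
  move=> i; case: (ltnP i n) => [/FG[y _ <-]|_]; first by exists y.
  by exists x0.
by exists n, c => y /KG[i ni Giy]; exists i => //; rewrite -Gc.
Qed.

Section Nets.
Variables (I : Type) (le : I -> I -> Prop).

Lemma cluster_point_exists (z : I -> X) :
  proper_metric d -> directed_preorder le -> mbounded d (range z) ->
  exists w, cluster_point le z w.
Proof.
move=> dP le_dir [c [r zcr]]; apply: contrapT => no_cluster.
have far w : exists e, 0 < e /\ exists s, forall t, le s t -> e <= d w (z t).
  apply: contrapT => near_w; apply: no_cluster; exists w => e e0 s.
  apply: contrapT => far_s; apply: near_w; exists e; split => //; exists s => t st.
  by rewrite leNgt; apply/negP => zt_e; apply: far_s; exists t.
have /choice[rad rad_far] := far.
have /choice[S S_far] w : exists s, forall t, le s t -> rad w <= d w (z t).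
  by case: (rad_far w).
have [[s0 _] _] := le_dir.
have [n [y cover]] :=
  mcompact_oball_cover (z s0) (dP c r) (fun w => (rad_far w).1).
have [s ub] := directed_ub_seq le_dir (S \o y) n.
have /cover[i /= ni] : cball d c r (z s) by apply: zcr; exists s.
by rewrite /oball /= ltNge S_far //; apply: ub.
Qed.

Lemma cov_tail_cluster_point (z : I -> X) w :
  cluster_point le z w -> forall s, cov d (z @` tail le s) w.
Proof.
have [_ [_ [d_sym d_tri]]] := hd.
move=> zw s c r tail_cr /=; apply/ler_addgt0Pr => e e0.
have [t st zt_e] := zw e e0 s.
apply: le_trans (d_tri c (z t) w) _; apply: lerD; first by apply: tail_cr; exists t.
by rewrite d_sym ltW.
Qed.

Lemma net_limsup_cluster_point_le (x z : I -> X) w : cluster_point le z w ->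
  (net_limsup le (fun s => (d w (x s))%:E) <=
   net_limsup le (fun t => net_limsup le (fun s => (d (z t) (x s))%:E)))%E.
Proof.
have [_ [_ [_ d_tri]]] := hd.
move=> zw; apply: le_ereal_inf_tmp => _ [s0 _ <-]; apply/lee_addgt0Pr => e e0.
have [t s0t zt_e] := zw e e0 s0.
apply: le_trans (net_limsup_le_cstD le (fun s => d_tri w (z t) (x s))) _.
rewrite addeC; apply: leeD; last by rewrite lee_fin ltW.
by apply: ereal_sup_ubound; exists t.
Qed.

End Nets.
End MetricNets.

Theorem lemma5p2 (R : realType) (X : Type) (d : X -> X -> R) :
  is_metric d -> proper_metric d -> propertyP d.
Proof.
move=> hd dP I le le_dir x z _ z_bnd _.
have [w zw] := cluster_point_exists hd dP le_dir z_bnd.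
exists w; split; first exact: cov_tail_cluster_point.
exact: net_limsup_cluster_point_le.
Qed.
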